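(* Let $G$ be a $K_{2,3}$-saturated graph with vertex set $V$ and let $\alpha \in V$. Define $V_1 = N[\alpha] \cup \{v \in V : |N(v)\cap N(\alpha)| = 2\}$, $\mathcal U_2 = \{v \in V\setminus V_1 : |N(v)\cap N(\alpha)| = 1\}$, and $\mathcal U_3 = V \setminus (V_1\cup \mathcal U_2)$. For $b \in \mathcal U_2$ let $\omega(b) = |N(b)\cap V_1| + \tfrac12 |N(b)\cap \mathcal U_2|$. Let $x^* \in N(\alpha)$ satisfy $|N(x^* )\cap N(\alpha)| \leq 1$. Then: (i) if $y \in \mathcal U_2$ and $x^*$ is the unique common neighbor of $\alpha$ and $y$, then $\omega(y) \geq 1.5$, and if $\omega(y) = 1.5$ then there exist $x \in N(\alpha)\cap N(x^* )$ and $y' \in N(x)$ such that $N(y)\cap \mathcal U_2 = \{y'\}$; (ii) if $z \in \mathcal U_3$, then $$|N(z)\cap (V\setminus \mathcal U_3)| \geq 1 + \big|\{x \in N(\alpha) : N(z)\cap N(x)\cap \mathcal U_2 \neq \emptyset\}\big|.$$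
   Context: All graphs are finite and simple; $N(x)$ is the set of neighbors of $x$ and $N[x] = N(x)\cup\{x\}$. A graph $G$ is $K_{2,3}$-saturated if $G$ contains no subgraph isomorphic to $K_{2,3}$, but for every pair of nonadjacent vertices $u,v$, the graph $G+uv$ contains a subgraph isomorphic to $K_{2,3}$. *)

(* A simple graph is a symmetric irreflexive relation e on a finType T. *)
From mathcomp Require Import all_boot all_order all_algebra.
Set Implicit Arguments. Unset Strict Implicit. Unset Printing Implicit Defensive.
Import GRing.Theory Num.Theory.

Definition nbhd (T : finType) (e : rel T) (x : T) : {set T} := [set y | e x y].
Definition cnbhd (T : finType) (e : rel T) (x : T) : {set T} := x |: nbhd e x.

Definition has_K23 (T : finType) (e : rel T) : Prop :=
  exists a1 a2 b1 b2 b3 : T,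
    uniq [:: a1; a2; b1; b2; b3] /\
    [&& e a1 b1, e a1 b2, e a1 b3, e a2 b1, e a2 b2 & e a2 b3].

Definition add_edge (T : finType) (e : rel T) (u v : T) : rel T :=
  fun x y => [|| e x y, (x == u) && (y == v) | (x == v) && (y == u)].

Definition K23_saturated (T : finType) (e : rel T) : Prop :=
  ~ has_K23 e /\
  forall u v : T, u != v -> ~~ e u v -> has_K23 (add_edge e u v).

Definition V1 (T : finType) (e : rel T) (alpha : T) : {set T} :=
  cnbhd e alpha :|: [set v | #|nbhd e v :&: nbhd e alpha| == 2].

Definition U2 (T : finType) (e : rel T) (alpha : T) : {set T} :=
  [set v | (v \notin V1 e alpha) && (#|nbhd e v :&: nbhd e alpha| == 1)].

Definition U3 (T : finType) (e : rel T) (alpha : T) : {set T} :=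
  ~: (V1 e alpha :|: U2 e alpha).

Definition omega (T : finType) (e : rel T) (alpha b : T) : rat :=
  (#|nbhd e b :&: V1 e alpha|%:R + #|nbhd e b :&: U2 e alpha|%:R / 2)%R.

From mathcomp Require Import all_boot all_order all_algebra zify.
Set Implicit Arguments. Unset Strict Implicit. Unset Printing Implicit Defensive.
Import GRing.Theory Num.Theory.

(* Write c(v) = |N(v) ∩ N(α)|. Without K_{2,3}, c(v) <= 2 for v ≠ α, so U3 consists
   of the vertices outside N[α] with no neighbour in N(α), and each u ∈ U2 has a
   unique common neighbour with α, its anchor. Saturation says that for a non-edge
   uv some neighbour of v has two common neighbours with u, or vice versa.
   For y ∈ U2 anchored at x*, applied to (y, α) this gives either a neighbour of α
   sharing two neighbours with y (both outside U3), or a neighbour of y in V1 other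
   than x*; so y has two neighbours outside U3, one of them x* ∈ V1, and 2ω(y) >= 3.
   In the tight case only the first alternative survives, with the two shared
   neighbours being x* and the unique U2-neighbour y' of y.
   For z ∈ U3, every x counted on the left is the anchor of some U2-neighbour of z,
   and saturation applied to (z, α) yields a neighbour of z in V1 or two
   U2-neighbours of z with the same anchor. *)

Section K23ViaCommonNeighbours.
Variables (T : finType) (e : rel T).

Lemma common_gt2_of_K23 :
  has_K23 e -> exists a1 a2, a1 != a2 /\ 2 < #|nbhd e a1 :&: nbhd e a2|.
Proof.
move=> [a1 [a2 [b1 [b2 [b3 [uniq_ab /and5P [e11 e12 e13 e21 /andP [e22 e23]]]]]]]].
move: uniq_ab; rewrite /= !inE !negb_or.
move=> /andP [/and4P [a12 _ _ _] /andP [_ /andP [/andP [b12 b13] /andP [b23 _]]]].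
exists a1, a2; split => //; apply/card_gt2P; exists b1, b2, b3.
by rewrite !inE e11 e12 e13 e21 e22 e23 b12 b23 eq_sym b13.
Qed.

Hypothesis e_irr : irreflexive e.

Lemma adj_neq x y : e x y -> x != y.
Proof. by apply: contraTneq => ->; rewrite e_irr. Qed.

Lemma K23_of_common_gt2 a1 a2 :
  a1 != a2 -> 2 < #|nbhd e a1 :&: nbhd e a2| -> has_K23 e.
Proof.
move=> a12 /card_gt2P [b1 [b2 [b3 [[] + + + [b12 b23 b31]]]]].
rewrite !inE => /andP [e11 e21] /andP [e12 e22] /andP [e13 e23].
exists a1, a2, b1, b2, b3; split; last by rewrite e11 e12 e13 e21 e22 e23.
rewrite /= !inE !negb_or a12 b12 b23 (eq_sym b1) b31.
by rewrite !(adj_neq e11, adj_neq e12, adj_neq e13, adj_neq e21, adj_neq e22, adj_neq e23).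
Qed.

Variables u v : T.
Hypothesis uv : u != v.

Lemma nbhd_add_edge_l : nbhd (add_edge e u v) u = v |: nbhd e u.
Proof. by apply/setP => y; rewrite !inE /add_edge eqxx (negbTE uv) orbF orbC. Qed.

Lemma nbhd_add_edge_other x :
  x != u -> x != v -> nbhd (add_edge e u v) x = nbhd e x.
Proof.
by move=> xu xv; apply/setP => y; rewrite !inE /add_edge (negbTE xu) (negbTE xv) orbF.
Qed.

Lemma nbhd_add_edgeC x : nbhd (add_edge e u v) x = nbhd (add_edge e v u) x.
Proof. by apply/setP => y; rewrite !inE /add_edge orbCA orbC orbA. Qed.

End K23ViaCommonNeighbours.

Section K23FreeGraph.
Variables (T : finType) (e : rel T).
Hypotheses (e_sym : symmetric e) (e_irr : irreflexive e) (K23free : ~ has_K23 e).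

Lemma common_le2 x y : x != y -> #|nbhd e x :&: nbhd e y| <= 2.
Proof. by move=> xy; rewrite leqNgt; apply/negP => /(K23_of_common_gt2 e_irr xy). Qed.

Lemma add_edge_common_gt2 u v a : u != v -> ~~ e u v -> a != u ->
  2 < #|nbhd (add_edge e u v) u :&: nbhd (add_edge e u v) a| ->
  e v a /\ 1 < #|nbhd e u :&: nbhd e a|.
Proof.
move=> uv nuv au; have [->|av] := eqVneq a v.
  rewrite nbhd_add_edge_l // nbhd_add_edgeC nbhd_add_edge_l 1?eq_sym //.
  have -> : (v |: nbhd e u) :&: (u |: nbhd e v) = nbhd e u :&: nbhd e v.
    apply/setP => y; rewrite !inE.
    have [->|yv] := eqVneq y v; first by rewrite e_irr (eq_sym v) (negbTE uv) andbF.
    by have [->|//] := eqVneq y u; rewrite e_irr.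
  by rewrite ltnNge common_le2.
rewrite nbhd_add_edge_l // nbhd_add_edge_other // => gt2.
set C := nbhd e u :&: nbhd e a.
have subC : ~~ e a v -> (v |: nbhd e u) :&: nbhd e a \subset C.
  move=> nav; apply/subsetP => y; rewrite !inE.
  by have [->|] := eqVneq y v; rewrite ?(negbTE nav) ?andbF.
have subvC : (v |: nbhd e u) :&: nbhd e a \subset v |: C.
  by apply/subsetP => y; rewrite !inE; case: (y == v).
split.
  rewrite e_sym; apply/negPn/negP => /subC/subset_leq_card le.
  by have := leq_trans gt2 le; rewrite ltnNge common_le2 // eq_sym.
have := leq_trans gt2 (subset_leq_card subvC).
by rewrite cardsU1; case: (v \notin C) => /=; lia.
Qed.

Hypothesis add_edge_K23 :
  forall u v, u != v -> ~~ e u v -> has_K23 (add_edge e u v).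

(* The K_{2,3} of G + uv must use the edge uv; if u is on its 2-side, the other
   vertex w of that side is adjacent to v and shares the two remaining vertices of
   the 3-side with u. *)
Lemma saturated_nonedge u v : u != v -> ~~ e u v ->
  (exists2 w, e v w & 1 < #|nbhd e u :&: nbhd e w|) \/
  (exists2 w, e u w & 1 < #|nbhd e v :&: nbhd e w|).
Proof.
move=> uv nuv; have [a1 [a2 [a12 gt2]]] := common_gt2_of_K23 (add_edge_K23 uv nuv).
wlog a1uv : a1 a2 a12 gt2 / (a1 == u) || (a1 == v).
  move=> wlog_a1; have [a1uv|] := boolP ((a1 == u) || (a1 == v)).
    exact: (wlog_a1 a1 a2).
  have [a2uv _|] := boolP ((a2 == u) || (a2 == v)).
    by apply: (wlog_a1 a2 a1) => //; rewrite 1?setIC // eq_sym.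
  rewrite !negb_or => /andP [a2u a2v] /andP [a1u a1v].
  by move: gt2; rewrite !nbhd_add_edge_other // ltnNge common_le2.
have nvu : ~~ e v u by rewrite e_sym.
have vu : v != u by rewrite eq_sym.
rewrite eq_sym in a12; case/orP: a1uv => /eqP a1E; subst a1.
  by left; have [] := add_edge_common_gt2 uv nuv a12 gt2; exists a2.
right; rewrite (nbhd_add_edgeC e u v v) (nbhd_add_edgeC e u v a2) in gt2.
by have [] := add_edge_common_gt2 vu nvu a12 gt2; exists a2.
Qed.

Variable alpha : T.

Lemma V1_common_gt1 w :
  w != alpha -> 1 < #|nbhd e w :&: nbhd e alpha| -> w \in V1 e alpha.
Proof. by move=> wa gt1; rewrite /V1 /cnbhd !inE eqn_leq common_le2 // gt1 !orbT. Qed.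

Lemma in_U3 z : (z \in U3 e alpha) =
  [&& z != alpha, ~~ e alpha z & nbhd e z :&: nbhd e alpha == set0].
Proof.
rewrite /U3 /U2 /V1 /cnbhd !inE -cards_eq0.
have [->|za] := eqVneq z alpha; first by [].
case: (e alpha z) => //=; move: (common_le2 za).
by case: #|_ :&: _| => [|[|[|n]]].
Qed.

Lemma notin_U3 c w : c != alpha -> e alpha w -> e c w -> c \notin U3 e alpha.
Proof.
move=> ca aw cw; rewrite in_U3 ca /=; apply/nandP; right.
by apply/set0Pn; exists w; rewrite !inE cw aw.
Qed.

Lemma card_nbhd_notU3 v : #|nbhd e v :&: ~: U3 e alpha| =
  #|nbhd e v :&: V1 e alpha| + #|nbhd e v :&: U2 e alpha|.
Proof.
rewrite setCK setIUr -cardsUI.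
suff -> : nbhd e v :&: V1 e alpha :&: (nbhd e v :&: U2 e alpha) = set0.
  by rewrite cards0 addn0.
by apply/setP => x; rewrite /U2 !inE; case: ((x == alpha) || _ || _); rewrite ?andbF.
Qed.

(* The unique common neighbour of u ∈ U2 and α; the default value u is junk. *)
Definition anchor u : T := odflt u [pick x in nbhd e u :&: nbhd e alpha].

Lemma anchorP u : u \in U2 e alpha -> nbhd e u :&: nbhd e alpha = [set anchor u].
Proof.
rewrite inE => /andP [_ /cards1P [x Nux]]; rewrite /anchor Nux.
by case: pickP => [y|/(_ x)]; rewrite inE ?eqxx // => /eqP ->.
Qed.

Lemma anchor_eq u x : u \in U2 e alpha -> e u x -> e alpha x -> anchor u = x.
Proof.
move=> uU2 ux ax; have : x \in nbhd e u :&: nbhd e alpha by rewrite !inE ux ax.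
by rewrite anchorP // inE => /eqP.
Qed.

Lemma U2_outside v : v \in U2 e alpha -> v != alpha /\ ~~ e alpha v.
Proof. by rewrite /U2 /V1 /cnbhd !inE => /andP [/norP [/norP [-> ->] _] _]. Qed.

Lemma notU3_cases c : c \notin U3 e alpha -> c \in V1 e alpha \/ c \in U2 e alpha.
Proof. by rewrite in_setC negbK in_setU => /orP. Qed.

Section UniqueAnchor.
Variables xs y : T.
Hypotheses (axs : e alpha xs) (xs_common_le1 : #|nbhd e xs :&: nbhd e alpha| <= 1).
Hypotheses (yU2 : y \in U2 e alpha) (y_anchor : nbhd e y :&: nbhd e alpha = [set xs]).

Lemma xs_nbhd_V1 : xs \in nbhd e y :&: V1 e alpha.
Proof.
have : xs \in nbhd e y :&: nbhd e alpha by rewrite y_anchor set11.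
by rewrite !in_setI /V1 /cnbhd !inE axs orbT => /andP [-> _].
Qed.

Lemma U2_saturation_cases :
  (exists w c1 c2, [/\ e alpha w, c1 != c2,
     c1 \in nbhd e y :&: nbhd e w :&: ~: U3 e alpha &
     c2 \in nbhd e y :&: nbhd e w :&: ~: U3 e alpha]) \/
  (exists2 w, w \in nbhd e y :&: V1 e alpha & w != xs).
Proof.
have [ya] := U2_outside yU2; rewrite e_sym => nay.
have [[w aw /card_gt1P [c1 [c2 [c1N c2N c12]]]] | [w yw gt1]] := saturated_nonedge ya nay.
  have notU3 c : c \in nbhd e y :&: nbhd e w ->
      c \in nbhd e y :&: nbhd e w :&: ~: U3 e alpha.
    move=> cN; rewrite in_setI cN in_setC.
    move: cN; rewrite in_setI => /andP [yc wc]; rewrite !inE in yc wc.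
    apply: (notin_U3 _ aw); last by rewrite e_sym.
    by apply: contraNneq nay => <-.
  by left; exists w, c1, c2; rewrite !notU3.
have wa : w != alpha by apply: contraNneq nay => <-.
right; exists w; first by rewrite in_setI inE yw V1_common_gt1 // setIC.
by apply: contraTneq gt1 => ->; rewrite -leqNgt setIC.
Qed.

Lemma card_nbhd_notU3_gt1 : 1 < #|nbhd e y :&: ~: U3 e alpha|.
Proof.
apply/card_gt1P.
case: U2_saturation_cases => [[w [c1 [c2 [_ c12 c1N c2N]]]] | [w wV wxs]].
  have sub : nbhd e y :&: nbhd e w :&: ~: U3 e alpha \subset nbhd e y :&: ~: U3 e alpha.
    exact/setSI/subsetIl.
  by exists c1, c2; rewrite !(subsetP sub).
have V1_notU3 x : x \in nbhd e y :&: V1 e alpha -> x \in nbhd e y :&: ~: U3 e alpha.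
  by rewrite setCK setIUr in_setU => ->.
by exists w, xs; rewrite !V1_notU3 ?xs_nbhd_V1.
Qed.

Lemma omega_lower : 3 <= 2 * #|nbhd e y :&: V1 e alpha| + #|nbhd e y :&: U2 e alpha|.
Proof.
have := card_nbhd_notU3_gt1; rewrite card_nbhd_notU3.
suff : 0 < #|nbhd e y :&: V1 e alpha| by lia.
by apply/card_gt0P; exists xs; rewrite xs_nbhd_V1.
Qed.

Lemma omega_tight :
  2 * #|nbhd e y :&: V1 e alpha| + #|nbhd e y :&: U2 e alpha| = 3 ->
  exists x y', [/\ x \in nbhd e alpha :&: nbhd e xs, y' \in nbhd e x &
                  nbhd e y :&: U2 e alpha = [set y']].
Proof.
have : 0 < #|nbhd e y :&: V1 e alpha| by apply/card_gt0P; exists xs; rewrite xs_nbhd_V1.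
move=> a_pos tight; have [/eqP/cards1P [x0 NyV1] /eqP/cards1P [y' NyU2]] :
  #|nbhd e y :&: V1 e alpha| = 1 /\ #|nbhd e y :&: U2 e alpha| = 1 by lia.
have {x0}NyV1 : nbhd e y :&: V1 e alpha = [set xs].
  by move: xs_nbhd_V1; rewrite NyV1 inE => /eqP <-.
have NyU3 : nbhd e y :&: ~: U3 e alpha = [set xs; y'] by rewrite setCK setIUr NyV1 NyU2.
case: U2_saturation_cases => [[w [c1 [c2 [aw c12 c1N c2N]]]] | [w]]; last first.
  by rewrite NyV1 inE => ->.
have memb c : c \in nbhd e y :&: nbhd e w :&: ~: U3 e alpha ->
    e w c /\ c \in [set xs; y'].
  by rewrite -NyU3 -setIA setICA !in_setI => /andP [wc /andP [-> ->]]; rewrite inE in wc.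
have [wxs wy'] : e w xs /\ e w y'.
  move: (memb _ c1N) (memb _ c2N) => [wc1 +] [wc2 +].
  by rewrite !inE => /orP [] /eqP E1 /orP [] /eqP E2; subst; rewrite ?eqxx in c12.
by exists w, y'; rewrite !inE aw e_sym wxs wy' NyU2.
Qed.

End UniqueAnchor.

Lemma sub_anchor_imset z :
  [set x in nbhd e alpha | nbhd e z :&: nbhd e x :&: U2 e alpha != set0]
    \subset anchor @: (nbhd e z :&: U2 e alpha).
Proof.
apply/subsetP => x; rewrite inE => /andP [ax /set0Pn [u]].
rewrite !in_setI => /andP [/andP [zu xu] uU2].
apply/imsetP; exists u; first by rewrite in_setI zu.
by rewrite !inE in ax xu; rewrite (anchor_eq uU2 _ ax) // e_sym.
Qed.

Lemma U3_saturation_cases z : z \in U3 e alpha ->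
  0 < #|nbhd e z :&: V1 e alpha| \/
  #|anchor @: (nbhd e z :&: U2 e alpha)| < #|nbhd e z :&: U2 e alpha|.
Proof.
rewrite in_U3 => /and3P [za + _]; rewrite e_sym => nza.
have V1_nbr c : e z c -> c \in V1 e alpha -> 0 < #|nbhd e z :&: V1 e alpha|.
  by move=> zc cV1; apply/card_gt0P; exists c; rewrite in_setI inE zc.
have [[w aw /card_gt1P [c1 [c2 [c1N c2N c12]]]] | [w zw gt1]] := saturated_nonedge za nza.
  have nbr_cases c : c \in nbhd e z :&: nbhd e w ->
      c \in V1 e alpha \/ [/\ e z c, c \in U2 e alpha & anchor c = w].
    move=> /setIP [zc wc]; rewrite !inE in zc wc.
    have ca : c != alpha by apply: contraNneq nza => <-.
    have [cV1|cU2] := notU3_cases (notin_U3 ca aw (etrans (e_sym _ _) wc)); first by left.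
    by right; rewrite (anchor_eq cU2 _ aw) // e_sym.
  have [c1V1|[zc1 c1U2 ac1]] := nbr_cases _ c1N.
    by left; apply: (V1_nbr c1) c1V1; case/setIP: c1N; rewrite inE.
  have [c2V1|[zc2 c2U2 ac2]] := nbr_cases _ c2N.
    by left; apply: (V1_nbr c2) c2V1; case/setIP: c2N; rewrite inE.
  right; rewrite ltn_neqAle leq_imset_card andbT; apply/imset_injP => inj.
  have S_mem c : e z c -> c \in U2 e alpha -> c \in nbhd e z :&: U2 e alpha.
    by move=> zc cU2; rewrite in_setI inE zc.
  by move: c12; rewrite (inj c1 c2) ?eqxx ?S_mem // ac1 ac2.
have wa : w != alpha by apply: contraNneq nza => <-.
by left; apply: (V1_nbr w zw); rewrite V1_common_gt1 // setIC.
Qed.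

Lemma U3_nbhd_bound z : z \in U3 e alpha ->
  1 + #|[set x in nbhd e alpha | nbhd e z :&: nbhd e x :&: U2 e alpha != set0]|
    <= #|nbhd e z :&: ~: U3 e alpha|.
Proof.
move=> zU3; rewrite card_nbhd_notU3.
have := subset_leq_card (sub_anchor_imset z).
have := leq_imset_card anchor (nbhd e z :&: U2 e alpha).
by case: (U3_saturation_cases zU3); lia.
Qed.

End K23FreeGraph.

Lemma omegaE (T : finType) (e : rel T) alpha v : omega e alpha v =
  ((2 * #|nbhd e v :&: V1 e alpha| + #|nbhd e v :&: U2 e alpha|)%:R / 2)%R.
Proof. by rewrite /omega natrD natrM mulrDl [(2%:R * _)%R]mulrC mulfK. Qed.

Lemma ler_half_nat m n : ((m%:R : rat) / 2 <= n%:R / 2)%R = (m <= n).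
Proof. by rewrite ler_pM2r ?invr_gt0 // ler_nat. Qed.

Lemma half_nat_inj m n : ((m%:R : rat) / 2 = n%:R / 2)%R -> m = n.
Proof.
by move/(congr1 (fun x => x * 2)%R); rewrite !mulfVK // => /eqP; rewrite eqr_nat => /eqP.
Qed.

Theorem corollary3p3 (T : finType) (e : rel T)
  (e_sym : symmetric e) (e_irr : irreflexive e) (Hsat : K23_saturated e)
  (alpha xs : T) (Hxs : xs \in nbhd e alpha)
  (Hxs1 : #|nbhd e xs :&: nbhd e alpha| <= 1) :
  (forall y : T, y \in U2 e alpha ->
     nbhd e y :&: nbhd e alpha = [set xs] ->
     (3%:R / 2%:R <= omega e alpha y)%R /\
     (omega e alpha y = (3%:R / 2%:R)%R ->
        exists x : T, exists y' : T,
          [/\ x \in nbhd e alpha :&: nbhd e xs, y' \in nbhd e x &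
              nbhd e y :&: U2 e alpha = [set y']])) /\
  (forall z : T, z \in U3 e alpha ->
     1 + #|[set x in nbhd e alpha |
              nbhd e z :&: nbhd e x :&: U2 e alpha != set0]|
       <= #|nbhd e z :&: ~: U3 e alpha|).
Proof.
case: Hsat => K23free add_edge_K23; rewrite inE in Hxs.
split=> [y yU2 y_anchor | z]; last exact: U3_nbhd_bound.
rewrite omegaE ler_half_nat; split.
  exact: (omega_lower e_sym e_irr K23free add_edge_K23 Hxs Hxs1 yU2 y_anchor).
move/half_nat_inj.
exact: (omega_tight e_sym e_irr K23free add_edge_K23 Hxs Hxs1 yU2 y_anchor).
Qed.
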